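(* Let $p>0$, $m>0$, and let $N$ be a random variable on $\mathbb{N}_0$ with the Abel probability mass function \[ f(n)=\mathbb{P}(N=n)=\frac{p\,(p+n)^{n-1}}{n!}\exp\Big(n\Big(\log\frac{m}{m+p}-\frac{m}{m+p}\Big)-\frac{mp}{m+p}\Big),\quad n\in\mathbb{N}_0 . \] Let $b(n)=\frac{1}{\sqrt{n+1}}\Big(\sqrt{1+\tfrac1n}-1\Big)$ for $n\in\mathbb{N}=\{1,2,\dots\}$. Then there is a constant $C$ not depending on $n$ such that \[ f(n\mid n\ge 1):=\mathbb{P}(N=n\mid N\ge 1)\le C\,b(n)\qquad\text{for all } n=1,2,\ldots. \]
   Context: $b$ is the probability mass function of $\lfloor U^{-2}\rfloor$ for $U$ uniform on $(0,1)$. The constant $C$ may depend on $p$ and $m$. *)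

From Stdlib Require Import Reals Arith.
Open Scope R_scope.

(* Abel probability mass function f(n) = P(N = n), n in N_0.
   (p+n)^(n-1) is the real power; for n = 0 it is p^(-1). *)
Definition abel_pmf (p m : R) (n : nat) : R :=
  p * Rpower (p + INR n) (INR n - 1) / INR (Factorial.fact n)
  * exp (INR n * (ln (m / (m + p)) - m / (m + p)) - m * p / (m + p)).

(* P(N >= 1) = 1 - P(N = 0), since abel_pmf is the pmf of N. *)
Definition abel_tail (p m : R) : R := 1 - abel_pmf p m 0.

Definition abel_cond (p m : R) (n : nat) : R := abel_pmf p m n / abel_tail p m.

Definition bfun (n : nat) : R :=
  / sqrt (INR n + 1) * (sqrt (1 + / INR n) - 1).

(* Write q = m/(m+p) and s = mp/(m+p).  Stirling-type bounds (p+n)^n <= n^n e^p <= n! e^(n+p)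
   give f(n) <= p/(p+n) * e^p * (q e^(1-q))^n, and q e^(1-q) < 1 because ln q < q - 1 for q <> 1.
   The geometric factor beats the extra sqrt(n+1), while b(n) ~ 1/(2 n^(3/2)) is bounded below
   by 1/(3 n sqrt(n+1)).  Dividing by P(N >= 1) = 1 - e^(-s) > 0 only changes the constant. *)

From Stdlib Require Import Reals Factorial Lra Lia Psatz.
Open Scope R_scope.

Lemma exp_le_exp (x y : R) : x <= y -> exp x <= exp y.
Proof.
  intros [hlt | ->]; [left; apply exp_increasing; exact hlt | right; reflexivity].
Qed.

Lemma ln_lt_sub_1 (x : R) : 0 < x -> x <> 1 -> ln x < x - 1.
Proof.
  intros hx hx1.
  assert (hlt : x < exp (x - 1)) by (pose proof (exp_ineq1 (x - 1)) as h; lra).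
  rewrite <- (ln_exp (x - 1)). apply ln_increasing; assumption.
Qed.

Lemma pow_1_plus_le_exp (t : R) (n : nat) : -1 <= t -> (1 + t) ^ n <= exp (INR n * t).
Proof.
  intros ht.
  replace (exp (INR n * t)) with (exp t ^ n).
  - apply pow_incr. pose proof (exp_ineq1_le t). lra.
  - rewrite <- Rpower_pow by apply exp_pos. unfold Rpower. rewrite ln_exp. reflexivity.
Qed.

Lemma pow_add_le_exp (a : R) (n : nat) : 0 <= a -> (INR n + a) ^ n <= INR n ^ n * exp a.
Proof.
  intros ha. destruct n as [|n].
  - simpl. pose proof (exp_ineq1_le a). lra.
  - set (k := INR (S n)).
    assert (hk : 0 < k) by (apply lt_0_INR; lia).
    replace (k + a) with (k * (1 + a / k)) by (field; lra).
    rewrite Rpow_mult_distr.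
    apply Rmult_le_compat_l; [apply pow_le; lra|].
    replace a with (k * (a / k)) at 2 by (field; lra).
    apply pow_1_plus_le_exp.
    assert (0 <= a / k) by (apply Rmult_le_pos; [lra | left; apply Rinv_0_lt_compat; lra]).
    lra.
Qed.

Lemma pow_self_le_fact_exp (n : nat) : INR n ^ n <= INR (fact n) * exp (INR n).
Proof.
  induction n as [|n IH].
  - simpl. rewrite exp_0. lra.
  - rewrite fact_simpl, mult_INR, S_INR, exp_plus. simpl pow.
    pose proof (pos_INR n). pose proof (exp_pos 1).
    pose proof (pow_add_le_exp 1 n ltac:(lra)).
    rewrite Rmult_assoc. apply Rmult_le_compat_l; [lra|].
    apply Rle_trans with (INR n ^ n * exp 1); [assumption|].
    rewrite <- Rmult_assoc. apply Rmult_le_compat_r; lra.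
Qed.

Lemma pow_add_le_fact_exp (a : R) (n : nat) :
  0 <= a -> (a + INR n) ^ n <= INR (fact n) * exp (INR n + a).
Proof.
  intros ha. rewrite Rplus_comm, exp_plus, <- Rmult_assoc.
  apply Rle_trans with (INR n ^ n * exp a); [apply pow_add_le_exp; exact ha|].
  apply Rmult_le_compat_r; [left; apply exp_pos | apply pow_self_le_fact_exp].
Qed.

Lemma Rpower_pred_nat (x : R) (n : nat) : 0 < x -> Rpower x (INR n - 1) = x ^ n / x.
Proof.
  intros hx. unfold Rminus.
  rewrite Rpower_plus, Rpower_Ropp, Rpower_pow, Rpower_1 by exact hx. reflexivity.
Qed.

Lemma sqrt_1_plus_sub_1_ge (w : R) : 0 <= w <= 3 -> w / 3 <= sqrt (1 + w) - 1.
Proof.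
  intros hw.
  pose proof (sqrt_sqrt (1 + w) ltac:(lra)). pose proof (sqrt_pos (1 + w)).
  assert (1 <= sqrt (1 + w)) by nra.
  assert (sqrt (1 + w) <= 2) by nra.
  nra.
Qed.

Lemma bfun_ge (n : nat) : (1 <= n)%nat -> / (3 * INR n * sqrt (INR n + 1)) <= bfun n.
Proof.
  intros hn. unfold bfun.
  assert (hn1 : 1 <= INR n) by (apply (le_INR 1); exact hn).
  assert (hsq : 0 < sqrt (INR n + 1)) by (apply sqrt_lt_R0; lra).
  assert (hinv : 0 < / INR n <= 1).
  { split; [apply Rinv_0_lt_compat; lra|].
    rewrite <- Rinv_1. apply Rinv_le_contravar; lra. }
  replace (/ (3 * INR n * sqrt (INR n + 1))) with (/ sqrt (INR n + 1) * (/ INR n / 3))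
    by (field; lra).
  apply Rmult_le_compat_l; [left; apply Rinv_0_lt_compat; exact hsq|].
  apply sqrt_1_plus_sub_1_ge. lra.
Qed.

(* x + 1 <= (1 + 1/d)(1 + d x) <= (1 + 1/d) e^(d x), and sqrt (x + 1) <= x + 1. *)
Lemma exp_decay_mul_sqrt_le (d x : R) :
  0 < d -> 0 <= x -> exp (- (d * x)) * sqrt (x + 1) <= 1 + / d.
Proof.
  intros hd hx.
  assert (hsq : sqrt (x + 1) <= x + 1).
  { pose proof (sqrt_sqrt (x + 1) ltac:(lra)). pose proof (sqrt_pos (x + 1)). nra. }
  assert (hlin : x + 1 <= (1 + / d) * exp (d * x)).
  { pose proof (exp_ineq1_le (d * x)). pose proof (Rinv_0_lt_compat d hd).
    apply Rle_trans with ((1 + / d) * (1 + d * x)); [|apply Rmult_le_compat_l; lra].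
    replace ((1 + / d) * (1 + d * x)) with (1 + d * x + / d + x) by (field; lra).
    nra. }
  rewrite exp_Ropp.
  pose proof (exp_pos (d * x)). pose proof (sqrt_pos (x + 1)).
  apply Rmult_le_reg_l with (exp (d * x)); [assumption|].
  rewrite <- Rmult_assoc, Rinv_r, Rmult_1_l by lra. lra.
Qed.

Lemma exp_decay_div_le_bfun (d : R) (n : nat) :
  0 < d -> (1 <= n)%nat -> exp (- (d * INR n)) / INR n <= 3 * (1 + / d) * bfun n.
Proof.
  intros hd hn.
  assert (hn1 : 1 <= INR n) by (apply (le_INR 1); exact hn).
  assert (hsq : 0 < sqrt (INR n + 1)) by (apply sqrt_lt_R0; lra).
  replace (exp (- (d * INR n)) / INR n)
    with (exp (- (d * INR n)) * sqrt (INR n + 1) * (3 * / (3 * INR n * sqrt (INR n + 1))))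
    by (field; lra).
  rewrite (Rmult_comm 3 (1 + / d)), (Rmult_assoc (1 + / d)).
  apply Rmult_le_compat.
  - left. apply Rmult_lt_0_compat; [apply exp_pos | exact hsq].
  - left. apply Rmult_lt_0_compat; [lra|]. apply Rinv_0_lt_compat.
    apply Rmult_lt_0_compat; [lra | exact hsq].
  - apply exp_decay_mul_sqrt_le; [exact hd | apply pos_INR].
  - apply Rmult_le_compat_l; [lra|]. apply bfun_ge. exact hn.
Qed.

(* The exponential decay rate of the Abel pmf: q e^(1-q) = e^(-abel_rate) with q = m/(m+p). *)
Definition abel_rate (p m : R) : R := m / (m + p) - 1 - ln (m / (m + p)).

Lemma abel_rate_pos (p m : R) : 0 < p -> 0 < m -> 0 < abel_rate p m.
Proof.
  intros hp hm. unfold abel_rate.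
  assert (hq : 0 < m / (m + p)) by (apply Rdiv_lt_0_compat; lra).
  assert (hq1 : m / (m + p) <> 1).
  { intros h. apply Rmult_eq_compat_r with (r := m + p) in h.
    unfold Rdiv in h. rewrite Rmult_assoc, Rinv_l, Rmult_1_r in h by lra. lra. }
  pose proof (ln_lt_sub_1 _ hq hq1). lra.
Qed.

Lemma abel_pmf_0 (p m : R) : 0 < p -> abel_pmf p m 0 = exp (- (m * p / (m + p))).
Proof.
  intros hp. unfold abel_pmf.
  rewrite Rpower_pred_nat by (simpl; lra). simpl INR. simpl fact. simpl pow.
  replace (0 * (ln (m / (m + p)) - m / (m + p)) - m * p / (m + p))
    with (- (m * p / (m + p))) by ring.
  field. lra.
Qed.

Lemma abel_tail_pos (p m : R) : 0 < p -> 0 < m -> 0 < abel_tail p m.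
Proof.
  intros hp hm. unfold abel_tail. rewrite abel_pmf_0 by exact hp.
  assert (0 < m * p / (m + p)) by (apply Rdiv_lt_0_compat; nra).
  assert (exp (- (m * p / (m + p))) < exp 0) by (apply exp_increasing; lra).
  rewrite exp_0 in *. lra.
Qed.

Lemma abel_pmf_le (p m : R) (n : nat) : 0 < p -> 0 < m ->
  abel_pmf p m n <= p / (p + INR n) * exp (p - abel_rate p m * INR n).
Proof.
  intros hp hm.
  set (q := m / (m + p)). set (s := m * p / (m + p)).
  assert (hs : 0 < s) by (apply Rdiv_lt_0_compat; nra).
  pose proof (pos_INR n) as hn.
  pose proof (INR_fact_lt_0 n) as hF.
  unfold abel_pmf. fold q s.
  rewrite Rpower_pred_nat by lra.
  set (E := exp (INR n * (ln q - q) - s)).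
  assert (hE : 0 < E) by apply exp_pos.
  replace (p * ((p + INR n) ^ n / (p + INR n)) / INR (fact n) * E)
    with (p / (p + INR n) * ((p + INR n) ^ n * E / INR (fact n))) by (field; lra).
  apply Rmult_le_compat_l; [left; apply Rdiv_lt_0_compat; lra|].
  apply Rle_trans with (exp (INR n + p) * E).
  - apply Rmult_le_reg_r with (INR (fact n)); [exact hF|].
    replace ((p + INR n) ^ n * E / INR (fact n) * INR (fact n))
      with ((p + INR n) ^ n * E) by (field; lra).
    replace (exp (INR n + p) * E * INR (fact n))
      with (INR (fact n) * exp (INR n + p) * E) by ring.
    apply Rmult_le_compat_r; [lra|]. apply pow_add_le_fact_exp. lra.
  - unfold E. rewrite <- exp_plus. apply exp_le_exp.
    unfold abel_rate. fold q. lra.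
Qed.

Lemma abel_cond_le (p m : R) (n : nat) : 0 < p -> 0 < m -> (1 <= n)%nat ->
  abel_cond p m n <= p * exp p / abel_tail p m * (exp (- (abel_rate p m * INR n)) / INR n).
Proof.
  intros hp hm hn.
  assert (hn1 : 1 <= INR n) by (apply (le_INR 1); exact hn).
  pose proof (abel_tail_pos p m hp hm) as hT.
  pose proof (abel_pmf_le p m n hp hm) as hf.
  pose proof (exp_pos p). pose proof (exp_pos (- (abel_rate p m * INR n))).
  rewrite Rminus_def, exp_plus in hf.
  unfold abel_cond.
  replace (p * exp p / abel_tail p m * (exp (- (abel_rate p m * INR n)) / INR n))
    with (p / INR n * exp p * exp (- (abel_rate p m * INR n)) / abel_tail p m)
    by (field; lra).
  apply Rmult_le_compat_r; [left; apply Rinv_0_lt_compat; exact hT|].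
  apply Rle_trans with (1 := hf). rewrite <- Rmult_assoc.
  apply Rmult_le_compat_r; [lra|]. apply Rmult_le_compat_r; [lra|].
  apply Rmult_le_compat_l; [lra|]. apply Rinv_le_contravar; lra.
Qed.

Theorem mainTheorem3 (p m : R) (hp : 0 < p) (hm : 0 < m) :
  exists C : R, forall n : nat, (1 <= n)%nat -> abel_cond p m n <= C * bfun n.
Proof.
  pose proof (abel_tail_pos p m hp hm) as hT.
  pose proof (abel_rate_pos p m hp hm) as hd.
  exists (p * exp p / abel_tail p m * (3 * (1 + / abel_rate p m))).
  intros n hn.
  apply Rle_trans with (1 := abel_cond_le p m n hp hm hn).
  rewrite Rmult_assoc. apply Rmult_le_compat_l.
  - pose proof (exp_pos p). left. apply Rdiv_lt_0_compat; nra.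
  - apply exp_decay_div_le_bfun; assumption.
Qed.
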